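(* Let $B\subseteq\mathcal{SC}\times\mathcal{SC}$ satisfy $B\subseteq\mathcal S(B,B)$, and let $\mathcal T=\{(\mathcal M^{-1}(\sigma_1),\mathcal M^{-1}(\sigma_2)) : \sigma_1B\sigma_2\}$. Then $\mathcal T\subseteq F_{\leq}(\mathcal T)$, i.e. $\mathcal T$ is a type simulation.
   Context: Fix base types $BT$ with preorder $\leq_{\mathsf b}$ and labels $\mathcal L$. Session type terms: $T::=\mathsf{end}\mid ?[M]T\mid ![M]T\mid \&\langle l_1{:}T_1,\dots,l_n{:}T_n\rangle\mid \oplus\langle l_1{:}T_1,\dots,l_n{:}T_n\rangle\mid \mu X.T\mid X$, $M::=T\mid\mathtt t$. Contract terms: $\sigma::=\mathbf 1\mid ?\mathtt t.\sigma\mid !\mathtt t.\sigma\mid !(\sigma).\sigma\mid ?(\sigma).\sigma\mid \sum_{i\in I}?l_i.\sigma_i\mid \bigoplus_{i\in I}!l_i.\sigma_i\mid \mu x.\sigma\mid x$. $\mathcal{ST}$, $\mathcal{SC}$ are the closed guarded terms. $\mathcal M$ is the homomorphic bijection from type terms to contract terms ($\mathsf{end}\mapsto\mathbf 1$, $![\mathtt t]S\mapsto!\mathtt t.\mathcal M(S)$, $?[\mathtt t]S\mapsto?\mathtt t.\mathcal M(S)$, $![T]S\mapsto!(\mathcal M(T)).\mathcal M(S)$, $?[T]S\mapsto?(\mathcal M(T)).\mathcal M(S)$, branch $\&\langle l_i{:}S_i\rangle\mapsto\sum_i?l_i.\mathcal M(S_i)$, choice $\oplus\langle l_i{:}S_i\rangle\mapsto\bigoplus_i!l_i.\mathcal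 M(S_i)$, $\mu X.S\mapsto\mu x.\mathcal M(S)$, $X\mapsto x$), with inverse $\mathcal M^{-1}$. For both languages $\mathrm{unfold}(\mu x.\sigma')=\mathrm{unfold}(\sigma'[\mu x.\sigma'/x])$, otherwise identity. $\mathcal S(R,B)$: set of contract pairs $(\sigma_1,\sigma_2)$ such that, depending on $\mathrm{unfold}(\sigma_1)$: $\mathbf 1$ forces $\mathrm{unfold}(\sigma_2)=\mathbf 1$; $?\mathtt t_1.\sigma_1'$ forces $?\mathtt t_2.\sigma_2'$ with $\sigma_1'R\sigma_2'$, $\mathtt t_1\leq_{\mathsf b}\mathtt t_2$; $!\mathtt t_1.\sigma_1'$ forces $!\mathtt t_2.\sigma_2'$ with $\sigma_1'R\sigma_2'$, $\mathtt t_2\leq_{\mathsf b}\mathtt t_1$; $!(\sigma^m_1).\sigma_1'$ forces $!(\sigma^m_2).\sigma_2'$ with $\sigma_1'R\sigma_2'$, $\sigma^m_2B\sigma^m_1$; $?(\sigma^m_1).\sigma_1'$ forces $?(\sigma^m_2).\sigma_2'$ with $\sigma_1'R\sigma_2'$, $\sigma^m_1B\sigma^m_2$; $\sum_{i\in I}?l_i.\sigma^1_i$ forces $\sum_{j\in J}?l_j.\sigma^2_j$ with $I\subseteq J$, $\sigma^1_iR\sigma^2_i$; $\bigoplus_{i\in I}!l_i.\sigma^1_i$ forces $\bigoplus_{j\in J}!l_j.\sigma^2_j$ with $J\subseteq I$, $\sigma^1_jR\sigma^2_j$ (forced forms are those of $\mathrm{unfold}(\sigma_2)$). $F_{\leq}(R)$,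 for $R\subseteq\mathcal{ST}^2$: pairs $(T,S)$ such that: $\mathrm{unfold}(T)=\mathsf{end}$ forces $\mathrm{unfold}(S)=\mathsf{end}$; $?[\mathtt t_1]S_1$ forces $\mathrm{unfold}(S)=?[\mathtt t_2]S_2$ with $S_1RS_2$, $\mathtt t_1\leq_{\mathsf b}\mathtt t_2$; $![\mathtt t_1]S_1$ forces $![\mathtt t_2]S_2$ with $S_1RS_2$, $\mathtt t_2\leq_{\mathsf b}\mathtt t_1$; $![T_1]S_1$ forces $![T_2]S_2$ with $S_1RS_2$, $T_2RT_1$; $?[T_1]S_1$ forces $?[T_2]S_2$ with $S_1RS_2$, $T_1RT_2$; $\&\langle l_1{:}T_1..l_m{:}T_m\rangle$ forces $\&\langle l_1{:}S_1..l_n{:}S_n\rangle$ with $m\le n$, $T_iRS_i$; $\oplus\langle l_1{:}T_1..l_m{:}T_m\rangle$ forces $\oplus\langle l_1{:}S_1..l_n{:}S_n\rangle$ with $n\le m$, $T_iRS_i$. A type simulation is $R$ with $R\subseteq F_\leq(R)$. *)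

From Stdlib Require Import List Arith.
Import ListNotations.
Set Implicit Arguments.

Section Syntax.
Variables (BT L : Type).

(* Session type terms  T ::= end | ?[M]T | ![M]T | &<l:T..> | (+)<l:T..> | mu X.T | X
   with M ::= T | t ; the two payload kinds are separate constructors.
   Variables are de Bruijn indices. *)
Inductive stype : Type :=
| st_end : stype
| st_inb : BT -> stype -> stype
| st_outb : BT -> stype -> stype
| st_ins : stype -> stype -> stype
| st_outs : stype -> stype -> stype
| st_branch : list (L * stype) -> stype
| st_choice : list (L * stype) -> stype
| st_mu : stype -> stype
| st_var : nat -> stype.

(* Contract terms; sums over I = {1..n} are represented by lists. *)
Inductive contract : Type :=
| c_one : contract
| c_inb : BT -> contract -> contract
| c_outb : BT -> contract -> contract
| c_ins : contract -> contract -> contract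
| c_outs : contract -> contract -> contract
| c_ext : list (L * contract) -> contract
| c_int : list (L * contract) -> contract
| c_mu : contract -> contract
| c_var : nat -> contract.

Fixpoint st_lift (c : nat) (t : stype) : stype :=
  match t with
  | st_end => st_end
  | st_inb b k => st_inb b (st_lift c k)
  | st_outb b k => st_outb b (st_lift c k)
  | st_ins m k => st_ins (st_lift c m) (st_lift c k)
  | st_outs m k => st_outs (st_lift c m) (st_lift c k)
  | st_branch bs => st_branch (map (fun p => (fst p, st_lift c (snd p))) bs)
  | st_choice bs => st_choice (map (fun p => (fst p, st_lift c (snd p))) bs)
  | st_mu b => st_mu (st_lift (S c) b)
  | st_var n => if n <? c then st_var n else st_var (S n)
  end.

Fixpoint st_subst (k : nat) (u : stype) (t : stype) : stype :=
  match t with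
  | st_end => st_end
  | st_inb b s => st_inb b (st_subst k u s)
  | st_outb b s => st_outb b (st_subst k u s)
  | st_ins m s => st_ins (st_subst k u m) (st_subst k u s)
  | st_outs m s => st_outs (st_subst k u m) (st_subst k u s)
  | st_branch bs => st_branch (map (fun p => (fst p, st_subst k u (snd p))) bs)
  | st_choice bs => st_choice (map (fun p => (fst p, st_subst k u (snd p))) bs)
  | st_mu b => st_mu (st_subst (S k) (st_lift 0 u) b)
  | st_var n => if n <? k then st_var n else if n =? k then u else st_var (pred n)
  end.

Fixpoint st_closed_at (n : nat) (t : stype) : bool :=
  match t with
  | st_end => true
  | st_inb _ k | st_outb _ k => st_closed_at n k
  | st_ins m k | st_outs m k => st_closed_at n m && st_closed_at n k
  | st_branch bs | st_choice bs => forallb (fun p => st_closed_at n (snd p)) bs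
  | st_mu b => st_closed_at (S n) b
  | st_var m => m <? n
  end.

(* body of a chain of n mu's does not reduce to a variable bound by that chain *)
Fixpoint st_contr (n : nat) (t : stype) : bool :=
  match t with
  | st_mu b => st_contr (S n) b
  | st_var m => n <=? m
  | _ => true
  end.

Fixpoint st_guarded (t : stype) : bool :=
  match t with
  | st_end => true
  | st_inb _ k | st_outb _ k => st_guarded k
  | st_ins m k | st_outs m k => st_guarded m && st_guarded k
  | st_branch bs | st_choice bs => forallb (fun p => st_guarded (snd p)) bs
  | st_mu b => st_contr 1 b && st_guarded b
  | st_var _ => true
  end.

Definition inST (t : stype) : Prop := st_closed_at 0 t = true /\ st_guarded t = true.

Inductive st_unfold : stype -> stype -> Prop :=
| stu_mu : forall b u, st_unfold (st_subst 0 (st_mu b) b) u -> st_unfold (st_mu b) u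
| stu_other : forall t, (forall b, t <> st_mu b) -> st_unfold t t.

Fixpoint c_lift (c : nat) (t : contract) : contract :=
  match t with
  | c_one => c_one
  | c_inb b k => c_inb b (c_lift c k)
  | c_outb b k => c_outb b (c_lift c k)
  | c_ins m k => c_ins (c_lift c m) (c_lift c k)
  | c_outs m k => c_outs (c_lift c m) (c_lift c k)
  | c_ext bs => c_ext (map (fun p => (fst p, c_lift c (snd p))) bs)
  | c_int bs => c_int (map (fun p => (fst p, c_lift c (snd p))) bs)
  | c_mu b => c_mu (c_lift (S c) b)
  | c_var n => if n <? c then c_var n else c_var (S n)
  end.

Fixpoint c_subst (k : nat) (u : contract) (t : contract) : contract :=
  match t with
  | c_one => c_one
  | c_inb b s => c_inb b (c_subst k u s)
  | c_outb b s => c_outb b (c_subst k u s)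
  | c_ins m s => c_ins (c_subst k u m) (c_subst k u s)
  | c_outs m s => c_outs (c_subst k u m) (c_subst k u s)
  | c_ext bs => c_ext (map (fun p => (fst p, c_subst k u (snd p))) bs)
  | c_int bs => c_int (map (fun p => (fst p, c_subst k u (snd p))) bs)
  | c_mu b => c_mu (c_subst (S k) (c_lift 0 u) b)
  | c_var n => if n <? k then c_var n else if n =? k then u else c_var (pred n)
  end.

Fixpoint c_closed_at (n : nat) (t : contract) : bool :=
  match t with
  | c_one => true
  | c_inb _ k | c_outb _ k => c_closed_at n k
  | c_ins m k | c_outs m k => c_closed_at n m && c_closed_at n k
  | c_ext bs | c_int bs => forallb (fun p => c_closed_at n (snd p)) bs
  | c_mu b => c_closed_at (S n) b
  | c_var m => m <? n
  end.

Fixpoint c_contr (n : nat) (t : contract) : bool :=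
  match t with
  | c_mu b => c_contr (S n) b
  | c_var m => n <=? m
  | _ => true
  end.

Fixpoint c_guarded (t : contract) : bool :=
  match t with
  | c_one => true
  | c_inb _ k | c_outb _ k => c_guarded k
  | c_ins m k | c_outs m k => c_guarded m && c_guarded k
  | c_ext bs | c_int bs => forallb (fun p => c_guarded (snd p)) bs
  | c_mu b => c_contr 1 b && c_guarded b
  | c_var _ => true
  end.

Definition inSC (t : contract) : Prop := c_closed_at 0 t = true /\ c_guarded t = true.

Inductive c_unfold : contract -> contract -> Prop :=
| cu_mu : forall b u, c_unfold (c_subst 0 (c_mu b) b) u -> c_unfold (c_mu b) u
| cu_other : forall t, (forall b, t <> c_mu b) -> c_unfold t t.

Fixpoint Mmap (t : stype) : contract :=
  match t with
  | st_end => c_one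
  | st_inb b k => c_inb b (Mmap k)
  | st_outb b k => c_outb b (Mmap k)
  | st_ins m k => c_ins (Mmap m) (Mmap k)
  | st_outs m k => c_outs (Mmap m) (Mmap k)
  | st_branch bs => c_ext (map (fun p => (fst p, Mmap (snd p))) bs)
  | st_choice bs => c_int (map (fun p => (fst p, Mmap (snd p))) bs)
  | st_mu b => c_mu (Mmap b)
  | st_var n => c_var n
  end.

Fixpoint Minv (t : contract) : stype :=
  match t with
  | c_one => st_end
  | c_inb b k => st_inb b (Minv k)
  | c_outb b k => st_outb b (Minv k)
  | c_ins m k => st_ins (Minv m) (Minv k)
  | c_outs m k => st_outs (Minv m) (Minv k)
  | c_ext bs => st_branch (map (fun p => (fst p, Minv (snd p))) bs)
  | c_int bs => st_choice (map (fun p => (fst p, Minv (snd p))) bs)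
  | c_mu b => st_mu (Minv b)
  | c_var n => st_var n
  end.

Variable leb : BT -> BT -> Prop.

Definition Sfun (R B : contract -> contract -> Prop) (s1 s2 : contract) : Prop :=
  inSC s1 /\ inSC s2 /\
  forall u1, c_unfold s1 u1 ->
  match u1 with
  | c_one => c_unfold s2 c_one
  | c_inb t1 k1 => exists t2 k2, c_unfold s2 (c_inb t2 k2) /\ R k1 k2 /\ leb t1 t2
  | c_outb t1 k1 => exists t2 k2, c_unfold s2 (c_outb t2 k2) /\ R k1 k2 /\ leb t2 t1
  | c_outs m1 k1 => exists m2 k2, c_unfold s2 (c_outs m2 k2) /\ R k1 k2 /\ B m2 m1
  | c_ins m1 k1 => exists m2 k2, c_unfold s2 (c_ins m2 k2) /\ R k1 k2 /\ B m1 m2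
  | c_ext bs1 => exists bs2, c_unfold s2 (c_ext bs2) /\ length bs1 <= length bs2 /\
      forall i l k1, nth_error bs1 i = Some (l, k1) ->
        exists k2, nth_error bs2 i = Some (l, k2) /\ R k1 k2
  | c_int bs1 => exists bs2, c_unfold s2 (c_int bs2) /\ length bs2 <= length bs1 /\
      forall i l k2, nth_error bs2 i = Some (l, k2) ->
        exists k1, nth_error bs1 i = Some (l, k1) /\ R k1 k2
  | c_mu _ | c_var _ => False
  end.

Definition Fle (R : stype -> stype -> Prop) (T S : stype) : Prop :=
  inST T /\ inST S /\
  forall u1, st_unfold T u1 ->
  match u1 with
  | st_end => st_unfold S st_end
  | st_inb t1 k1 => exists t2 k2, st_unfold S (st_inb t2 k2) /\ R k1 k2 /\ leb t1 t2
  | st_outb t1 k1 => exists t2 k2, st_unfold S (st_outb t2 k2) /\ R k1 k2 /\ leb t2 t1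
  | st_outs m1 k1 => exists m2 k2, st_unfold S (st_outs m2 k2) /\ R k1 k2 /\ R m2 m1
  | st_ins m1 k1 => exists m2 k2, st_unfold S (st_ins m2 k2) /\ R k1 k2 /\ R m1 m2
  | st_branch bs1 => exists bs2, st_unfold S (st_branch bs2) /\ length bs1 <= length bs2 /\
      forall i l k1, nth_error bs1 i = Some (l, k1) ->
        exists k2, nth_error bs2 i = Some (l, k2) /\ R k1 k2
  | st_choice bs1 => exists bs2, st_unfold S (st_choice bs2) /\ length bs2 <= length bs1 /\
      forall i l k2, nth_error bs2 i = Some (l, k2) ->
        exists k1, nth_error bs1 i = Some (l, k1) /\ R k1 k2
  | st_mu _ | st_var _ => False
  end.

Definition type_simulation (R : stype -> stype -> Prop) : Prop :=
  forall T S, R T S -> Fle R T S.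

Definition Minv_rel (B : contract -> contract -> Prop) (T S : stype) : Prop :=
  exists s1 s2, B s1 s2 /\ T = Minv s1 /\ S = Minv s2.

End Syntax.

(* M^-1 is a homomorphism commuting with lifting, substitution and hence with
   unfolding, and it preserves closedness and guardedness. Since unfolding of
   [M^-1 s] is the image of the unfolding of [s], every clause of [S(B,B)] for
   [s1 B s2] transports verbatim to the corresponding clause of [F_<=] for
   [(M^-1 s1, M^-1 s2)]. *)
From Stdlib Require Import List Arith.
Set Implicit Arguments.

Lemma forallb_map_Forall (A C : Type) (f : C -> bool) (g : A -> C) (h : A -> bool)
  (l : list A) :
  Forall (fun x => f (g x) = h x) l -> forallb f (map g l) = forallb h l.
Proof. induction 1 as [|x l Hx _ IH]; simpl; [reflexivity|now rewrite Hx, IH]. Qed.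

Section ContractToType.
Variables BT L : Type.

Local Notation contract := (contract BT L).
Local Notation stype := (stype BT L).
Local Notation map_snd f := (map (fun p => (fst p, f (snd p)))).

(* Nested induction: the structural principle generated for [contract] gives
   no hypothesis for the continuations of a sum. *)
Definition contract_nested_ind (P : contract -> Prop)
  (H_one : P (c_one _ _))
  (H_inb : forall b k, P k -> P (c_inb b k))
  (H_outb : forall b k, P k -> P (c_outb b k))
  (H_ins : forall m k, P m -> P k -> P (c_ins m k))
  (H_outs : forall m k, P m -> P k -> P (c_outs m k))
  (H_ext : forall bs, Forall (fun p => P (snd p)) bs -> P (c_ext bs))
  (H_int : forall bs, Forall (fun p => P (snd p)) bs -> P (c_int bs))
  (H_mu : forall b, P b -> P (c_mu b))
  (H_var : forall n, P (c_var _ _ n)) : forall t, P t :=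
  fix F t := match t return P t with
  | c_one _ _ => H_one
  | c_inb b k => H_inb b k (F k)
  | c_outb b k => H_outb b k (F k)
  | c_ins m k => H_ins m k (F m) (F k)
  | c_outs m k => H_outs m k (F m) (F k)
  | c_ext bs => H_ext bs (list_ind (fun bs => Forall (fun p => P (snd p)) bs)
      (Forall_nil _) (fun p _ IH => Forall_cons p (F (snd p)) IH) bs)
  | c_int bs => H_int bs (list_ind (fun bs => Forall (fun p => P (snd p)) bs)
      (Forall_nil _) (fun p _ IH => Forall_cons p (F (snd p)) IH) bs)
  | c_mu b => H_mu b (F b)
  | c_var _ _ n => H_var n
  end.

Lemma Minv_lift (t : contract) c : Minv (c_lift c t) = st_lift c (Minv t).
Proof.
  revert c; induction t using contract_nested_ind; intros; simpl; try congruence.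
  1, 2: f_equal; rewrite !map_map; apply map_ext_Forall;
        eapply Forall_impl; [|eassumption]; simpl; congruence.
  now destruct (n <? c).
Qed.

Lemma Minv_subst (t : contract) k u :
  Minv (c_subst k u t) = st_subst k (Minv u) (Minv t).
Proof.
  revert k u; induction t using contract_nested_ind; intros; simpl; try congruence.
  1, 2: f_equal; rewrite !map_map; apply map_ext_Forall;
        eapply Forall_impl; [|eassumption]; simpl; congruence.
  - now rewrite IHt, Minv_lift.
  - now destruct (n <? k), (n =? k).
Qed.

Lemma Minv_closed_at (t : contract) n : st_closed_at n (Minv t) = c_closed_at n t.
Proof.
  revert n; induction t using contract_nested_ind; intros; simpl; try congruence.
  1, 2: apply forallb_map_Forall; eapply Forall_impl; [|eassumption]; simpl; congruence.
Qed.

Lemma Minv_contr (t : contract) n : st_contr n (Minv t) = c_contr n t.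
Proof. revert n; induction t using contract_nested_ind; intros; simpl; auto. Qed.

Lemma Minv_guarded (t : contract) : st_guarded (Minv t) = c_guarded t.
Proof.
  induction t using contract_nested_ind; simpl; try congruence.
  1, 2: apply forallb_map_Forall; eapply Forall_impl; [|eassumption]; simpl; congruence.
  now rewrite Minv_contr, IHt.
Qed.

Lemma Minv_inST (t : contract) : inSC t -> inST (Minv t).
Proof. intros [Hc Hg]; split; [rewrite Minv_closed_at | rewrite Minv_guarded]; assumption. Qed.

Lemma Minv_unfold (s u : contract) : c_unfold s u -> st_unfold (Minv s) (Minv u).
Proof.
  induction 1 as [b u _ IH | t Hnot_mu]; simpl.
  - constructor; now rewrite Minv_subst in IH.
  - constructor; intros b E.
    destruct t; try discriminate; eapply Hnot_mu; reflexivity.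
Qed.

Lemma st_unfold_Minv (s : contract) (v : stype) :
  st_unfold (Minv s) v -> exists u, c_unfold s u /\ v = Minv u.
Proof.
  remember (Minv s) as T eqn:ET; intros Hunf; revert s ET.
  induction Hunf as [b v _ IH | T Hnot_mu]; intros s ET.
  - destruct s; try discriminate; injection ET as ->.
    destruct (IH (c_subst 0 (c_mu s) s)) as [u [Hu ->]].
    + now rewrite Minv_subst.
    + exists u; split; [now constructor | reflexivity].
  - subst; exists s; split; [|reflexivity].
    constructor; intros b ->; eapply Hnot_mu; reflexivity.
Qed.

Lemma nth_error_map_snd_inv (A C : Type) (f : A -> C) (bs : list (L * A)) i l k :
  nth_error (map_snd f bs) i = Some (l, k) ->
  exists k', nth_error bs i = Some (l, k') /\ k = f k'.
Proof.
  rewrite nth_error_map; destruct (nth_error bs i) as [[l' k']|]; simpl;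
    intros E; inversion E; eauto.
Qed.

Lemma branches_Minv (P : contract -> contract -> Prop) (Q : stype -> stype -> Prop)
  (P_Q : forall k1 k2, P k1 k2 -> Q (Minv k1) (Minv k2))
  (bs1 bs2 : list (L * contract)) :
  (forall i l k1, nth_error bs1 i = Some (l, k1) ->
     exists k2, nth_error bs2 i = Some (l, k2) /\ P k1 k2) ->
  forall i l k1, nth_error (map_snd (@Minv BT L) bs1) i = Some (l, k1) ->
    exists k2, nth_error (map_snd (@Minv BT L) bs2) i = Some (l, k2) /\ Q k1 k2.
Proof.
  intros Hbs i l k1 E.
  destruct (nth_error_map_snd_inv _ _ _ E) as [k1' [E1 ->]].
  destruct (Hbs _ _ _ E1) as [k2 [E2 HP]].
  exists (Minv k2); split; [now rewrite (map_nth_error _ _ _ E2) | now apply P_Q].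
Qed.

Section Transport.
Variable leb : BT -> BT -> Prop.
Variables (R B : contract -> contract -> Prop) (T : stype -> stype -> Prop).
Hypothesis R_T : forall k1 k2, R k1 k2 -> T (Minv k1) (Minv k2).
Hypothesis B_T : forall m1 m2, B m1 m2 -> T (Minv m1) (Minv m2).

Lemma Sfun_Minv (s1 s2 : contract) :
  Sfun leb R B s1 s2 -> Fle leb T (Minv s1) (Minv s2).
Proof.
  intros [HS1 [HS2 Hpost]].
  split; [now apply Minv_inST|]; split; [now apply Minv_inST|].
  intros v Hv; destruct (st_unfold_Minv _ Hv) as [u [Hu ->]].
  specialize (Hpost u Hu).
  destruct u as [| t1 k1 | t1 k1 | m1 k1 | m1 k1 | bs1 | bs1 | |]; simpl in *;
    try contradiction.
  - exact (Minv_unfold Hpost).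
  - destruct Hpost as [t2 [k2 [H2 [Hk Ht]]]].
    exists t2, (Minv k2); split; [exact (Minv_unfold H2)|]; auto.
  - destruct Hpost as [t2 [k2 [H2 [Hk Ht]]]].
    exists t2, (Minv k2); split; [exact (Minv_unfold H2)|]; auto.
  - destruct Hpost as [m2 [k2 [H2 [Hk Hm]]]].
    exists (Minv m2), (Minv k2); split; [exact (Minv_unfold H2)|]; auto.
  - destruct Hpost as [m2 [k2 [H2 [Hk Hm]]]].
    exists (Minv m2), (Minv k2); split; [exact (Minv_unfold H2)|]; auto.
  - destruct Hpost as [bs2 [H2 [Hlen Hbs]]].
    exists (map_snd (@Minv BT L) bs2); rewrite !length_map.
    split; [exact (Minv_unfold H2)|]; split; [exact Hlen|].
    exact (branches_Minv _ _ R_T _ _ Hbs).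
  - destruct Hpost as [bs2 [H2 [Hlen Hbs]]].
    exists (map_snd (@Minv BT L) bs2); rewrite !length_map.
    split; [exact (Minv_unfold H2)|]; split; [exact Hlen|].
    exact (branches_Minv (fun k2 k1 => R k1 k2) _ (fun _ _ H => R_T H) _ _ Hbs).
Qed.

End Transport.
End ContractToType.

Theorem mainTheorem15 (BT L : Type) (leb : BT -> BT -> Prop)
  (leb_refl : forall t, leb t t)
  (leb_trans : forall t1 t2 t3, leb t1 t2 -> leb t2 t3 -> leb t1 t3)
  (B : contract BT L -> contract BT L -> Prop)
  (B_SC : forall s1 s2, B s1 s2 -> inSC s1 /\ inSC s2)
  (B_post : forall s1 s2, B s1 s2 -> Sfun leb B B s1 s2) :
  type_simulation leb (Minv_rel B).
Proof.
  intros T S [s1 [s2 [HB [-> ->]]]].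
  assert (B_Minv : forall k1 k2, B k1 k2 -> Minv_rel B (Minv k1) (Minv k2))
    by (intros k1 k2 Hk; exists k1, k2; auto).
  apply Sfun_Minv with (R := B) (B := B); [exact B_Minv | exact B_Minv | exact (B_post _ _ HB)].
Qed.
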